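(* For every integer $\nu\ge0$, $$\operatorname{sech}^5(D/2)\,0^{[2\nu]}=\tfrac43\sinh(D)\,0^{[2\nu+3]},$$ and consequently $$\frac43\sum_{k=0}^{\nu+1}t(2\nu+3,2k+1)=\frac{(2\nu)!}{2^{2\nu}}\binom{-5/2}{\nu}.$$
   Context: Central factorials: $x^{[0]}=1$, $x^{[n]}=x\prod_{j=1}^{n-1}(x+\tfrac n2-j)$ for $n\ge1$; $t(n,k)$ is defined by $x^{[n]}=\sum_k t(n,k)x^k$. For a power series $h(D)=\sum_k h_kD^k$ (the Taylor series at $0$ of the indicated function of $D$), $h(D)\,0^{[n]}:=\sum_k h_k\,k!\,t(n,k)$. *)

From HB Require Import structures.
From mathcomp Require Import all_boot all_order all_algebra.
Set Implicit Arguments. Unset Strict Implicit. Unset Printing Implicit Defensive.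
Import Order.TTheory GRing.Theory Num.Theory.
Local Open Scope ring_scope.

(* Central factorial x^[n] as a polynomial over rat:
   x^[0] = 1,  x^[n] = x * prod_{j=1}^{n-1} (x + n/2 - j). *)
Definition cfact (n : nat) : {poly rat} :=
  if n is 0%N then 1
  else 'X * \prod_(1 <= j < n) ('X + (n%:R / 2 - j%:R)%:P).

Definition t (n k : nat) : rat := (cfact n)`_k.

Definition series := nat -> rat.

Definition smul (a b : series) : series :=
  fun n => \sum_(i < n.+1) a i * b (n - i)%N.

Definition sone : series := fun n => if n == 0%N then 1 else 0.

Definition spow (a : series) (m : nat) : series := iter m (smul a) sone.

(* multiplicative inverse of a series with a 0 <> 0:
   b_0 = 1/a_0, b_n = -(1/a_0) sum_{i=1}^n a_i b_{n-i} *)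
Fixpoint sinv_seq (a : series) (n : nat) : seq rat :=
  match n with
  | 0%N => [:: (a 0%N)^-1]
  | m.+1 => let s := sinv_seq a m in
            rcons s (- (a 0%N)^-1 *
                       \sum_(1 <= i < m.+2) a i * nth 0 s (m.+1 - i)%N)
  end.

Definition sinv (a : series) : series := fun n => nth 0 (sinv_seq a n) n.

Definition cosh_half : series :=
  fun k => if odd k then 0 else 1 / (2 ^+ k * k`!%:R).

Definition sech5_half : series := spow (sinv cosh_half) 5.

Definition sinh_s : series := fun k => if odd k then 1 / k`!%:R else 0.

(* h(D) 0^[n] := sum_k h_k k! t(n,k); t(n,k) = 0 for k > n so sum over k <= n *)
Definition applyD (h : series) (n : nat) : rat :=
  \sum_(k < n.+1) h k * k`!%:R * t n k.

Definition gbinom (a : rat) (k : nat) : rat :=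
  (\prod_(i < k) (a - i%:R)) / k`!%:R.

From HB Require Import structures.
From mathcomp Require Import all_boot all_order all_algebra.
From mathcomp Require Import ring lra zify.
Import Order.TTheory GRing.Theory Num.Theory.
Local Open Scope ring_scope.
Set Implicit Arguments. Unset Strict Implicit. Unset Printing Implicit Defensive.

(* Multiplication by x corresponds to differentiating h
   (evalD_XM) and x^[2n+2] = (x^2 - n^2) x^[2n] (cfactS2), hence
   h(D) 0^[2n+2] = h''(D) 0^[2n] - n^2 h(D) 0^[2n].  The powers of
   S = sech(x/2) = 1/cosh(x/2) satisfy 4 (S^r)'' = r^2 S^r - r(r+1) S^(r+2),
   which follows from 4C'' = C for C = cosh(x/2); it is proved on polynomial
   truncations, with congruences modulo X^m (eqmodX).  Induction on n, for all
   r at once, gives sech^r(D/2) 0^[2n] = (2n)!/2^(2n) binom(-r/2, n).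

   Odd side.  sinh(D) 0^[2n+3] is the sum of the odd coefficients of
   x^[2n+3]; as x^[2n+3] is an odd polynomial, this is its value at 1, which
   cfactS2 evaluates to (3/4) (2n)!/2^(2n) binom(-5/2, n). *)

Section CongruenceModXn.
Variable R : comNzRingType.
Implicit Types (p q g : {poly R}) (m n : nat).

Definition eqmodX m p q := exists g, p = q + 'X^m * g.

Lemma eq_eqmodX m p q : p = q -> eqmodX m p q.
Proof. by move=> ->; exists 0; rewrite mulr0 addr0. Qed.

Lemma eqmodX_sym m p q : eqmodX m p q -> eqmodX m q p.
Proof. by case=> g ->; exists (- g); ring. Qed.

Lemma eqmodX_trans m p q r : eqmodX m p q -> eqmodX m q r -> eqmodX m p r.
Proof. by case=> g -> [h ->]; exists (g + h); ring. Qed.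

Lemma eqmodX_trans_eq m p q q' : eqmodX m p q -> q = q' -> eqmodX m p q'.
Proof. by move=> pq <-. Qed.

Lemma eqmodXD m p q p' q' :
  eqmodX m p q -> eqmodX m p' q' -> eqmodX m (p + p') (q + q').
Proof. by case=> g -> [h ->]; exists (g + h); ring. Qed.

Lemma eqmodXN m p q : eqmodX m p q -> eqmodX m (- p) (- q).
Proof. by case=> g ->; exists (- g); ring. Qed.

Lemma eqmodXM m p q p' q' :
  eqmodX m p q -> eqmodX m p' q' -> eqmodX m (p * p') (q * q').
Proof. by case=> g -> [h ->]; exists (g * q' + q * h + 'X^m * g * h); ring. Qed.

Lemma eqmodXMl m p q c : eqmodX m p q -> eqmodX m (c * p) (c * q).
Proof. exact/eqmodXM/eq_eqmodX. Qed.

Lemma eqmodXMr m p q c : eqmodX m p q -> eqmodX m (p * c) (q * c).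
Proof. by move=> pq; apply: eqmodXM pq (eq_eqmodX _ _). Qed.

Lemma eqmodXMn m p q k : eqmodX m p q -> eqmodX m (p *+ k) (q *+ k).
Proof. by rewrite -[p *+ k]mulr_natr -[q *+ k]mulr_natr; apply: eqmodXMr. Qed.

Lemma eqmodXX m p q k : eqmodX m p q -> eqmodX m (p ^+ k) (q ^+ k).
Proof.
move=> pq; elim: k => [|k IH]; first exact: eq_eqmodX.
by rewrite !exprS; apply: eqmodXM.
Qed.

Lemma eqmodX_le m n p q : (n <= m)%N -> eqmodX m p q -> eqmodX n p q.
Proof. by move=> /subnK <- [g ->]; exists ('X^(m - n) * g); rewrite exprD; ring. Qed.

Lemma eqmodX_deriv m p q : eqmodX m.+1 p q -> eqmodX m p^`() q^`().
Proof.
case=> g ->; exists (g *+ m.+1 + 'X * g^`()).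
rewrite derivD derivM derivXn /= !exprS; ring.
Qed.

Lemma eqmodX_coef m p q k : eqmodX m p q -> (k < m)%N -> p`_k = q`_k.
Proof. by case=> g -> km; rewrite coefD coefXnM km addr0. Qed.

Lemma coef_eqmodX m p q : (forall k, (k < m)%N -> p`_k = q`_k) -> eqmodX m p q.
Proof.
move=> pq; exists (drop_poly m (p - q)).
apply/polyP => i; rewrite coefD coefXnM coef_drop_poly.
have [im|im] := ltnP i m; first by rewrite addr0 pq.
by rewrite subnK // coefB addrC subrK.
Qed.

End CongruenceModXn.

Lemma eqmodX_const (R : numDomainType) m (p : {poly R}) :
  eqmodX m p^`() 0 -> eqmodX m.+1 p (p`_0)%:P.
Proof.
move=> dp0; apply: coef_eqmodX => -[|k]; rewrite coefC //= ltnS => km.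
have := eqmodX_coef dp0 km; rewrite coef_deriv coef0.
by move/eqP; rewrite mulrn_eq0 /= => /eqP.
Qed.

Definition trunc (N : nat) (a : series) : {poly rat} := \poly_(i < N) a i.
Definition sder (a : series) : series := fun k => a k.+1 *+ k.+1.

Lemma trunc_smul N a b : eqmodX N (trunc N (smul a b)) (trunc N a * trunc N b).
Proof.
apply: coef_eqmodX => k kN; rewrite coef_poly kN coefM.
apply: eq_bigr => i _; rewrite !coef_poly.
have ik : (i <= k)%N by rewrite -ltnS.
by rewrite (leq_ltn_trans ik kN) (leq_ltn_trans (leq_subr i k) kN).
Qed.

Lemma trunc_sone N : eqmodX N (trunc N sone) 1.
Proof. by apply: coef_eqmodX => -[|k] kN; rewrite coef_poly kN coefC. Qed.

Lemma trunc_spow N a n : eqmodX N (trunc N (spow a n)) (trunc N a ^+ n).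
Proof.
elim: n => [|n IH]; first exact: trunc_sone.
rewrite exprS /spow iterS -/(spow a n).
exact: eqmodX_trans (trunc_smul _ _ _) (eqmodXMl _ IH).
Qed.

Lemma trunc_sder N a : trunc N (sder a) = (trunc N.+1 a)^`().
Proof.
by apply/polyP => i; rewrite coef_deriv !coef_poly ltnS; case: ifP; rewrite ?mul0rn.
Qed.

Lemma spow0 a r : spow a r 0%N = a 0%N ^+ r.
Proof.
elim: r => [|r IH] //.
by rewrite /spow iterS -/(spow a r) /smul big_ord1 subnn IH exprS.
Qed.

Lemma size_sinv_seq a n : size (sinv_seq a n) = n.+1.
Proof. by elim: n => //= n IH; rewrite size_rcons IH. Qed.

Lemma nth_sinv_seq a n j : (j <= n)%N -> nth 0 (sinv_seq a n) j = sinv a j.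
Proof.
elim: n j => [|n IH] j; first by rewrite leqn0 => /eqP ->.
rewrite leq_eqVlt => /orP [/eqP -> //|jn].
by rewrite /= nth_rcons size_sinv_seq jn IH.
Qed.

Lemma sinvS a m : sinv a m.+1 =
  - (a 0%N)^-1 * \sum_(1 <= i < m.+2) a i * sinv a (m.+1 - i)%N.
Proof.
rewrite /sinv /= nth_rcons size_sinv_seq ltnn eqxx.
congr (_ * _); apply: eq_big_nat => i /andP [i1 _].
by rewrite nth_sinv_seq // leq_subLR -add1n leq_add2r.
Qed.

Lemma smul_sinv a n : a 0%N != 0 -> smul a (sinv a) n = sone n.
Proof.
move=> a0; rewrite /smul /sone; case: n => [|m].
  by rewrite big_ord1 /sinv /= mulfV.
rewrite big_ord_recl /= subn0 sinvS mulrA mulrN mulfV // mulN1r.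
by rewrite big_add1 /= big_mkord addrC subrr.
Qed.

Lemma trunc_sinv N a : a 0%N != 0 -> eqmodX N (trunc N a * trunc N (sinv a)) 1.
Proof.
move=> a0; apply: eqmodX_trans (eqmodX_sym (trunc_smul _ _ _)) _.
by apply: coef_eqmodX => k kN; rewrite coef_poly kN smul_sinv // coefC /sone.
Qed.

Section InverseOfHyperbolicCosine.
(* Abstract setting of sech = 1/cosh, up to order m: C behaves like cosh(x/2)
   (C(0) = 1, C'(0) = 0, 4C'' = C) and S is its inverse modulo X^(m+2). *)
Variables (R : numDomainType) (m : nat) (C S : {poly R}).
Hypotheses (CS1 : eqmodX m.+2 (C * S) 1) (C_ode : eqmodX m (C^`()^`() *+ 4) C).
Hypotheses (C0 : C`_0 = 1) (C1 : C`_1 = 0).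

Lemma deriv_inv : eqmodX m.+1 S^`() (- (C^`() * S ^+ 2)).
Proof.
have dCS : eqmodX m.+1 (C^`() * S + C * S^`()) 0.
  by have := eqmodX_deriv CS1; rewrite derivM -polyC1 derivC.
(* S' = S' (C S) = S (C' S + C S') - C' S^2 = -C' S^2. *)
rewrite -[S^`()]mulr1.
apply: eqmodX_trans (eqmodXMl _ (eqmodX_sym (eqmodX_le (leqnSn _) CS1))) _.
have -> : S^`() * (C * S) = S * (C^`() * S + C * S^`()) - C^`() * S ^+ 2 by ring.
apply: eqmodX_trans_eq (eqmodXD (eqmodXMl S dCS) (eq_eqmodX _ (erefl _))) _.
by rewrite mulr0 add0r.
Qed.

Lemma deriv_invX n : eqmodX m.+1 (S ^+ n)^`() (- (C^`() * S ^+ n.+1) *+ n).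
Proof.
case: n => [|n]; first by apply: eq_eqmodX; rewrite expr0 -polyC1 derivC mulr0n.
rewrite deriv_exp /=; apply: eqmodX_trans_eq (eqmodXMn _ (eqmodXMr _ deriv_inv)) _.
by rewrite !exprS; ring.
Qed.

Lemma hyperbolic_identity : eqmodX m.+1 (C^`() ^+ 2 *+ 4) (C ^+ 2 - 1).
Proof.
set F := C ^+ 2 - C^`() ^+ 2 *+ 4.
have dF : eqmodX m F^`() 0.
  have -> : F^`() = (C - C^`()^`() *+ 4) * C^`() *+ 2.
    by rewrite /F derivB derivMn !deriv_exp /=; ring.
  apply: eqmodX_trans_eq (eqmodXMn _ (eqmodXMr _ (eqmodXD (eq_eqmodX _ (erefl C))
    (eqmodXN C_ode)))) _.
  by rewrite subrr mul0r mul0rn.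
have F1 : eqmodX m.+1 F 1.
  apply: eqmodX_trans_eq (eqmodX_const dF) _.
  rewrite /F !expr2 coefB coefMn !coef0M coef_deriv C0 C1.
  by rewrite mul0rn mul0r mul0rn subr0 mulr1.
have -> : C^`() ^+ 2 *+ 4 = C ^+ 2 - F by rewrite /F; ring.
exact: eqmodX_trans_eq (eqmodXD (eq_eqmodX _ (erefl _)) (eqmodXN F1)) _.
Qed.

Lemma invX_ode r :
  eqmodX m ((S ^+ r)^`()^`() *+ 4) (S ^+ r *+ (r ^ 2) - S ^+ r.+2 *+ (r * r.+1)).
Proof.
(* Differentiating (S^r)' = -r C' S^(r+1) once more. *)
have d2 : eqmodX m (S ^+ r)^`()^`()
    ((- (C^`()^`() * S ^+ r.+1) + C^`() ^+ 2 * S ^+ r.+2 *+ r.+1) *+ r).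
  apply: eqmodX_trans (eqmodX_deriv (deriv_invX r)) _.
  rewrite derivMn derivN derivM; apply: eqmodXMn.
  apply: eqmodX_trans_eq (eqmodXN (eqmodXD (eq_eqmodX _ (erefl _))
    (eqmodXMl _ (eqmodX_le (leqnSn _) (deriv_invX r.+1))))) _.
  by rewrite !exprS; ring.
apply: eqmodX_trans (eqmodXMn 4 d2) _.
have -> : (- (C^`()^`() * S ^+ r.+1) + C^`() ^+ 2 * S ^+ r.+2 *+ r.+1) *+ r *+ 4 =
    (- (C^`()^`() *+ 4 * S ^+ r.+1) + C^`() ^+ 2 *+ 4 * S ^+ r.+2 *+ r.+1) *+ r.
  by ring.
(* Replace 4C'' by C and 4C'^2 by C^2 - 1, then C S by 1. *)
have CS1m : eqmodX m (C * S) 1 by apply: eqmodX_le CS1; apply: leqW.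
have -> : S ^+ r *+ (r ^ 2) - S ^+ r.+2 *+ (r * r.+1) =
    (- (1 * S ^+ r) + (1 ^+ 2 * S ^+ r - S ^+ r.+2) *+ r.+1) *+ r.
  by rewrite -[r.+1]addn1 expnS expn1; ring.
apply: eqmodX_trans (eqmodXMn _ (eqmodXD (eqmodXN (eqmodXMr _ C_ode))
  (eqmodXMn _ (eqmodXMr _ (eqmodX_le (leqnSn _) hyperbolic_identity))))) _.
have -> : (- (C * S ^+ r.+1) + (C ^+ 2 - 1) * S ^+ r.+2 *+ r.+1) *+ r =
    (- ((C * S) * S ^+ r) + ((C * S) ^+ 2 * S ^+ r - S ^+ r.+2) *+ r.+1) *+ r.
  by rewrite !exprS; ring.
apply: eqmodXMn; apply: eqmodXD (eqmodXN (eqmodXMr _ CS1m)) _.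
apply: eqmodXMn; apply: eqmodXD (eq_eqmodX _ (erefl _)).
exact: eqmodXMr (eqmodXX 2 CS1m).
Qed.

End InverseOfHyperbolicCosine.

Lemma cosh_half_ode k : sder (sder cosh_half) k *+ 4 = cosh_half k.
Proof.
rewrite /sder /cosh_half /= negbK; case: (odd k); first by rewrite !mul0rn.
rewrite -!mulrnA -mulr_natr !factS !natrM !exprS.
have h2 : (2 ^+ k : rat) != 0 by apply: expf_neq0.
have hf : (k`!%:R : rat) != 0 by rewrite pnatr_eq0 -lt0n fact_gt0.
have k0 : (0 : rat) <= k%:R := ler0n _ _.
field; rewrite h2 hf /=.
by apply/andP; split; apply/negP => /eqP; lra.
Qed.

Definition sech_half : series := sinv cosh_half.

Lemma sech_half_ode r k :
  sder (sder (spow sech_half r)) k *+ 4 =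
  spow sech_half r k *+ (r ^ 2) - spow sech_half r.+2 k *+ (r * r.+1).
Proof.
set N := k.+3; set C := trunc N cosh_half; set S := trunc N sech_half.
have cosh0 : cosh_half 0%N = 1 by rewrite /cosh_half /= expr0 mul1r divr1.
have CS1 : eqmodX N (C * S) 1 by apply: trunc_sinv; rewrite cosh0 oner_neq0.
have C_ode : eqmodX k.+1 (C^`()^`() *+ 4) C.
  rewrite /C -!trunc_sder; apply: coef_eqmodX => j jk.
  by rewrite coefMn !coef_poly jk cosh_half_ode (leq_trans jk) // ltnW.
have C0 : C`_0 = 1 by rewrite coef_poly /= cosh0.
have C1 : C`_1 = 0 by rewrite coef_poly.
have Spow n : eqmodX N (trunc N (spow sech_half n)) (S ^+ n) := trunc_spow _ _ _.
have ode := eqmodX_trans (eqmodXMn 4 (eqmodX_deriv (eqmodX_deriv (Spow r))))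
  (invX_ode CS1 C_ode C0 C1 r).
have kN : (k < N)%N by rewrite /N; lia.
move: (eqmodX_coef ode (ltnSn k)); rewrite -!trunc_sder coefMn coef_poly ltnSn => ->.
rewrite coefB !coefMn -(eqmodX_coef (Spow r) kN) -(eqmodX_coef (Spow r.+2) kN).
by rewrite !coef_poly kN.
Qed.

Implicit Types (h : series) (p q : {poly rat}).

(* h(D) applied to the polynomial p, evaluated at 0. *)
Definition evalD (h : series) (p : {poly rat}) : rat :=
  \sum_(k < size p) h k * k`!%:R * p`_k.

Lemma evalD_wide N h p :
  (size p <= N)%N -> evalD h p = \sum_(k < N) h k * k`!%:R * p`_k.
Proof.
move=> pN; rewrite /evalD (big_ord_widen _ (fun k => h k * k`!%:R * p`_k) pN).
rewrite big_mkcond /=; apply: eq_bigr => i _.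
by case: ltnP => // /(nth_default 0) ->; rewrite mulr0.
Qed.

(* h(D) (x p) = h'(D) p at 0, since D^k (x p) = x D^k p + k D^(k-1) p. *)
Lemma evalD_XM h p : evalD h ('X * p) = evalD (sder h) p.
Proof.
have sz : (size ('X * p)%R <= (size p).+1)%N.
  by rewrite (leq_trans (size_polyMleq _ _)) // size_polyX.
rewrite (evalD_wide _ sz) /evalD big_ord_recl /= coefXM /= mulr0 add0r.
by apply: eq_bigr => i _; rewrite coefXM /= /sder factS natrM; ring.
Qed.

Lemma evalD_sub h p q c : evalD h (p - c%:P * q) = evalD h p - c * evalD h q.
Proof.
set N := maxn (size p) (size q).
have sz : (size (p - c%:P * q)%R <= N)%N.
  apply: leq_trans (size_polyD _ _) _; rewrite size_polyN mul_polyC geq_max leq_maxl.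
  exact: leq_trans (size_scale_leq _ _) (leq_maxr _ _).
rewrite !(@evalD_wide N) ?leq_maxl ?leq_maxr // mulr_sumr -sumrB.
by apply: eq_bigr => i _; rewrite coefB coefCM; ring.
Qed.

Lemma evalD_lincomb (f g h : series) (a b c : nat) p :
  (forall k, h k *+ a = f k *+ b - g k *+ c) ->
  evalD h p *+ a = evalD f p *+ b - evalD g p *+ c.
Proof.
move=> hfg; rewrite /evalD -!sumrMnl -sumrB; apply: eq_bigr => k _.
transitivity ((h k *+ a) * (k`!%:R * p`_k)); first by ring.
by rewrite hfg; ring.
Qed.

Lemma nat_ind2 (P : nat -> Prop) :
  P 0%N -> P 1%N -> (forall n, P n -> P n.+2) -> forall n, P n.
Proof.
move=> P0 P1 PS n; suff : P n /\ P n.+1 by case.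
by elim: n => [|n [Pn Pn1]]; split=> //; apply: PS.
Qed.

Lemma cfact1 : cfact 1 = 'X.
Proof. by rewrite /cfact big_geq // mulr1. Qed.

Lemma cfactS2 n : cfact n.+2 = ('X^2 - ((n%:R / 2) ^+ 2)%:P) * cfact n.
Proof.
case: n => [|n].
  rewrite /cfact big_nat1 mul0r expr0n subr0 mulr1 expr2.
  by rewrite (_ : 2%:R / 2 - 1%:R = 0 :> rat) ?addr0 //; field.
rewrite /cfact big_nat_recl // big_nat_recr //=.
set c := n.+1%:R / 2 : rat.
rewrite (eq_big_nat _ _ (F2 := fun j => 'X + (c - j%:R)%:P)); last first.
  by move=> j _; congr (_ + _%:P); rewrite /c -[n.+3]addn2 -[j.+1]addn1 !natrD; field.
have -> : n.+3%:R / 2 - 1%:R = c :> rat by rewrite /c -[n.+3]addn2 natrD; field.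
have -> : n.+3%:R / 2 - n.+2%:R = - c :> rat by rewrite /c -[n.+3]addn1 natrD; field.
by clearbody c; rewrite [c ^+ 2]expr2 polyCN polyCM; ring.
Qed.

Lemma cfact_even_rec n :
  cfact (2 * n.+1) = 'X * ('X * cfact (2 * n)) - (n%:R ^+ 2)%:P * cfact (2 * n).
Proof.
rewrite (_ : (2 * n.+1 = (2 * n).+2)%N) ?cfactS2; last lia.
by rewrite mulrBl mulrA -expr2 natrM; congr (_ - (_ ^+ 2)%:P * _); field.
Qed.

Lemma size_cfact n : (size (cfact n) <= n.+1)%N.
Proof.
elim/nat_ind2: n => [||n IH]; first by rewrite size_poly1.
  by rewrite cfact1 size_polyX.
rewrite cfactS2; apply: leq_trans (size_polyMleq _ _) _.
by rewrite size_XnsubC //; move: IH; case: (size (cfact n)).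
Qed.

Lemma t_parity n k : odd (n + k) -> t n k = 0.
Proof.
elim/nat_ind2: n k => [k|k|n IH k].
- by rewrite /t /cfact coefC; case: k.
- by rewrite /t cfact1 coefX; case: k => [|[]].
rewrite /t cfactS2 mulrBl coefB coefXnM coefCM addSn addSn /= negbK => odd_nk.
rewrite -/(t n k) IH // mulr0 subr0; case: ltnP => // k2.
by rewrite -/(t n (k - 2)) IH //; move: odd_nk; rewrite -{1}(subnK k2) addnA oddD addbF.
Qed.

Lemma applyD_evalD h n : applyD h n = evalD h (cfact n).
Proof. by rewrite (evalD_wide _ (size_cfact n)). Qed.

Lemma gbinomS a n : gbinom a n.+1 = gbinom a n * (a - n%:R) / n.+1%:R.
Proof.
rewrite /gbinom big_ord_recr factS natrM /=.
have hf : (n`!%:R : rat) != 0 by rewrite pnatr_eq0 -lt0n fact_gt0.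
by field; rewrite hf nat1r pnatr_eq0.
Qed.

Lemma gbinom_pred a n : gbinom (a - 1) n * a = gbinom a n * (a - n%:R).
Proof.
have prod_shift :
    (\prod_(i < n) (a - 1 - i%:R)) * a = (\prod_(i < n) (a - i%:R)) * (a - n%:R).
  transitivity (\prod_(i < n.+1) (a - i%:R)); last by rewrite big_ord_recr.
  rewrite big_ord_recl /= subr0 mulrC; congr (_ * _).
  by apply: eq_bigr => i _; rewrite /bump /= add1n -addn1 natrD; ring.
by rewrite /gbinom mulrAC prod_shift [RHS]mulrAC.
Qed.

Definition sech_value (r n : nat) : rat :=
  (2 * n)`!%:R / 2 ^+ (2 * n) * gbinom (- (r%:R / 2)) n.

Lemma sech_valueS r n :
  sech_value r n.+1 = sech_value r n * ((2 * n).+1%:R / 2) * (- (r%:R / 2) - n%:R).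
Proof.
rewrite /sech_value gbinomS (_ : (2 * n.+1 = (2 * n).+2)%N); last lia.
rewrite !factS !natrM !exprS.
have h2 : (2 ^+ (2 * n) : rat) != 0 by apply: expf_neq0.
rewrite (_ : (2 * n).+2 = (n.+1 * 2)%N); last lia.
by rewrite natrM; field; rewrite h2 nat1r pnatr_eq0.
Qed.

Lemma sech_value_shift r n :
  sech_value r.+2 n * (- (r%:R / 2)) = sech_value r n * (- (r%:R / 2) - n%:R).
Proof.
rewrite /sech_value -[LHS]mulrA -[RHS]mulrA -gbinom_pred; congr (_ * (gbinom _ _ * _)).
by rewrite -[r.+2]addn2 natrD; field.
Qed.

(* The recursion matching x^[2n+2] = (x^2 - n^2) x^[2n] and the differential
   equation 4 (S^r)'' = r^2 S^r - r(r+1) S^(r+2). *)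
Lemma sech_value_rec r n :
  sech_value r n.+1 *+ 4 = sech_value r n *+ (r ^ 2)
    - sech_value r.+2 n *+ (r * r.+1) - (n%:R ^+ 2 * sech_value r n) *+ 4.
Proof.
have -> : sech_value r.+2 n *+ (r * r.+1) =
    sech_value r.+2 n * (- (r%:R / 2)) * (- (r%:R + 1) *+ 2).
  by field.
by rewrite sech_value_shift sech_valueS; field.
Qed.

Lemma sech_power_value r n :
  evalD (spow sech_half r) (cfact (2 * n)) = sech_value r n.
Proof.
elim: n r => [|n IH] r.
  rewrite /evalD /cfact size_poly1 big_ord1 spow0 coefC /sech_half /sinv /=.
  by rewrite /sech_value /gbinom /cosh_half /= big_ord0 !(divr1, mulr1, invr1, expr1n).
apply: (@pmulrnI _ 4) => //; rewrite sech_value_rec -!IH cfact_even_rec.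
by rewrite evalD_sub !evalD_XM mulrnBl (evalD_lincomb _ (sech_half_ode r)).
Qed.

Lemma sum_even_odd (V : nmodType) (F : nat -> V) m :
  \sum_(i < 2 * m) F i = \sum_(k < m) F (2 * k)%N + \sum_(k < m) F (2 * k + 1)%N.
Proof.
elim: m => [|m IH]; first by rewrite muln0 !big_ord0 addr0.
rewrite (_ : (2 * m.+1 = (2 * m).+2)%N); last lia.
by rewrite !big_ord_recr /= IH addn1 -addrA addrACA.
Qed.

Lemma applyD_sinh n :
  applyD sinh_s (2 * n + 3) = \sum_(k < n.+2) t (2 * n + 3) (2 * k + 1).
Proof.
rewrite /applyD (_ : ((2 * n + 3).+1 = 2 * n.+2)%N); last lia.
rewrite (sum_even_odd (fun k => sinh_s k * k`!%:R * t (2 * n + 3) k)).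
rewrite big1 ?add0r => [|i _]; last by rewrite /sinh_s oddM /= !mul0r.
apply: eq_bigr => i _; rewrite /sinh_s addn1 /= oddM /=.
by rewrite mul1r mulVf ?mul1r // pnatr_eq0 -lt0n fact_gt0.
Qed.

(* As x^[2n+3] is odd, the sum of its odd coefficients is its value at 1. *)
Lemma odd_coef_sum n :
  \sum_(k < n.+2) t (2 * n + 3) (2 * k + 1) = (cfact (2 * n + 3)).[1].
Proof.
have sz : (size (cfact (2 * n + 3)) <= 2 * n.+2)%N.
  by apply: leq_trans (size_cfact _) _; lia.
rewrite (horner_coef_wide 1 sz) (sum_even_odd (fun k => (cfact (2 * n + 3))`_k * 1 ^+ k)).
rewrite [X in _ = X + _]big1 ?add0r => [|k _]; last first.
  by rewrite -/(t _ (2 * k)) t_parity ?mul0r // !oddD /= !addbF !addbb.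
by apply: eq_bigr => k _; rewrite expr1n mulr1.
Qed.

Lemma cfact_odd_at1 n : 4%:R / 3%:R * (cfact (2 * n + 3)).[1] = sech_value 5 n.
Proof.
elim: n => [|n IH].
  rewrite cfactS2 cfact1 /sech_value /gbinom big_ord0 fact0.
  by rewrite hornerM hornerD hornerN hornerXn hornerC hornerX expr1n; field.
have -> : (2 * n.+1 + 3 = (2 * n + 3).+2)%N by lia.
have n3E : (2 * n + 3)%:R = 2 * n%:R + 3 :> rat by rewrite -natrM -natrD.
have n1E : (2 * n).+1%:R = 2 * n%:R + 1 :> rat by rewrite -natrM natr1.
rewrite cfactS2 sech_valueS -IH hornerM hornerD hornerN hornerXn hornerC expr1n n3E n1E.
by field.
Qed.

Theorem mainTheorem8 (nu : nat) :
  applyD sech5_half (2 * nu)%N = 4%:R / 3%:R * applyD sinh_s (2 * nu + 3)%N /\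
  4%:R / 3%:R * \sum_(k < nu.+2) t (2 * nu + 3) (2 * k + 1)
    = (2 * nu)`!%:R / 2 ^+ (2 * nu) * gbinom (- (5%:R / 2%:R)) nu.
Proof.
have odd_part : 4%:R / 3%:R * \sum_(k < nu.+2) t (2 * nu + 3) (2 * k + 1)
    = sech_value 5 nu by rewrite odd_coef_sum cfact_odd_at1.
split; last exact: odd_part.
by rewrite applyD_evalD sech_power_value applyD_sinh odd_part.
Qed.
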